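(* Let $B\in\mathbb{C}^{n\times n}$ be nonzero of rank $r$ with Hartwig–Spindelböck decomposition $B=U\begin{bmatrix}\Sigma K&\Sigma L\\0&0\end{bmatrix}U^*$, let $T\in\mathbb{C}^{r\times r}$ be idempotent, and let $A=U\begin{bmatrix}(\Sigma^{-1}T)^\dagger K&(\Sigma^{-1}T)^\dagger L\\0&0\end{bmatrix}U^*$, so that $A\le^{\diamond}B$. Then $(AB)^\dagger=B^\dagger A^\dagger$ if and only if $$\big((\Sigma^{-1}T)^\dagger K\Sigma\big)^\dagger=\Sigma^{-1}K^*\Sigma^{-1}T.$$
   Context: $M^*$ is the conjugate transpose, $M^\dagger$ the Moore–Penrose inverse, $\mathcal{R}(M)$ the column space. Hartwig–Spindelböck decomposition: every $B\in\mathbb{C}^{n\times n}$ of rank $r>0$ can be written $B=U\begin{bmatrix}\Sigma K&\Sigma L\\0&0\end{bmatrix}U^*$ with $U$ unitary, $\Sigma\in\mathbb{C}^{r\times r}$ the positive diagonal matrix of nonzero singular values of $B$, $K\in\mathbb{C}^{r\times r}$, $L\in\mathbb{C}^{r\times(n-r)}$ with $KK^*+LL^*=I_r$. Diamond order: $A\le^{\diamond}B$ iff $\mathcal{R}(A)\subseteq\mathcal{R}(B)$, $\mathcal{R}(A^* )\subseteq\mathcal{R}(B^* )$, and $AB^*A=AA^*A$. *)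

(* Complex matrices over an arbitrary numClosedFieldType C
   (e.g. algC, or complex R); conjugation is Num.conj (notation x^* ). *)
From HB Require Import structures.
From mathcomp Require Import all_boot all_order all_algebra.
From Stdlib Require Import ClassicalEpsilon.
Set Implicit Arguments. Unset Strict Implicit. Unset Printing Implicit Defensive.
Import Order.TTheory GRing.Theory Num.Theory.
Local Open Scope ring_scope.

Definition ctmx (C : numClosedFieldType) (m n : nat) (M : 'M[C]_(m, n))
  : 'M[C]_(n, m) := (map_mx Num.conj M)^T.

Definition penrose (C : numClosedFieldType) (m n : nat)
  (M : 'M[C]_(m, n)) (X : 'M[C]_(n, m)) : Prop :=
  [/\ M *m X *m M = M, X *m M *m X = X,
      ctmx (M *m X) = M *m X & ctmx (X *m M) = X *m M].

(* Moore-Penrose inverse M^+ : the (unique, always existing) matrix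
   satisfying the Penrose equations, chosen by classical epsilon. *)
Definition mpinv (C : numClosedFieldType) (m n : nat) (M : 'M[C]_(m, n))
  : 'M[C]_(n, m) :=
  epsilon (inhabits (0 : 'M[C]_(n, m))) (penrose M).

From HB Require Import structures.
From mathcomp Require Import all_boot all_order all_algebra.
From Stdlib Require Import ClassicalEpsilon.
Set Implicit Arguments. Unset Strict Implicit. Unset Printing Implicit Defensive.
Import Order.TTheory GRing.Theory Num.Theory.
Local Open Scope ring_scope.

(* Writing N = [K L] (so that N N^* = I) and W = (Sigma^-1 T)^+, the two
   matrices are unitary conjugates of block columns:
     B = U [Sigma N; 0] U^*,   A = U [W N; 0] U^*,   AB = U [W K Sigma N; 0] U^*.
   The Moore-Penrose inverse commutes with unitary conjugation, turns a block
   column [Y; 0] into the block row [Y^+ 0], and satisfies (X N)^+ = N^* X^+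
   when N has orthonormal rows.  Hence
     (AB)^+  = U [N^* (W K Sigma)^+          0] U^*,
     B^+ A^+ = U [N^* Sigma^-1 K^* W^+       0] U^*,
   and W^+ = Sigma^-1 T; the two sides agree exactly when the blocks do, since
   N^* is left-cancellable. *)

Section ConjugateTranspose.
Variable C : numClosedFieldType.

Lemma ctmx_mul m n p (A : 'M[C]_(m, n)) (B : 'M[C]_(n, p)) :
  ctmx (A *m B) = ctmx B *m ctmx A.
Proof. by rewrite /ctmx map_mxM trmx_mul. Qed.

Lemma ctmxK m n (A : 'M[C]_(m, n)) : ctmx (ctmx A) = A.
Proof.
rewrite /ctmx map_trmx trmxK; apply/matrixP => i j; rewrite !mxE.
exact: conjCK.
Qed.

Lemma ctmx1 n : ctmx (1%:M : 'M[C]_n) = 1%:M.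
Proof. by rewrite /ctmx map_mx1 tr_scalar_mx. Qed.

Lemma ctmx0 m n : ctmx (0 : 'M[C]_(m, n)) = 0.
Proof. by rewrite /ctmx map_mx0 trmx0. Qed.

Lemma ctmx_inv n (A : 'M[C]_n) : ctmx (invmx A) = invmx (ctmx A).
Proof. by rewrite /ctmx map_invmx trmx_inv. Qed.

Lemma ctmx_row_mx m n1 n2 (A1 : 'M[C]_(m, n1)) (A2 : 'M[C]_(m, n2)) :
  ctmx (row_mx A1 A2) = col_mx (ctmx A1) (ctmx A2).
Proof. by rewrite /ctmx map_row_mx tr_row_mx. Qed.

Lemma ctmx_col_mx m1 m2 n (A1 : 'M[C]_(m1, n)) (A2 : 'M[C]_(m2, n)) :
  ctmx (col_mx A1 A2) = row_mx (ctmx A1) (ctmx A2).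
Proof. by rewrite /ctmx map_col_mx tr_col_mx. Qed.

Lemma mulmx_ctmx_eq0 n (y : 'rV[C]_n) : y *m ctmx y = 0 -> y = 0.
Proof.
move=> /matrixP /(_ 0 0); rewrite !mxE => y_norm0.
have sum_sq0 : \sum_j `|y 0 j| ^+ 2 = 0.
  by rewrite -[RHS]y_norm0; apply: eq_bigr => j _; rewrite !mxE normCK.
apply/matrixP => i j; rewrite !mxE (ord1 i).
have : `|y 0 j| ^+ 2 = 0.
  by apply: (psumr_eq0P _ sum_sq0) => // k _; rewrite exprn_ge0.
by move/eqP; rewrite expf_eq0 /= normr_eq0 => /eqP.
Qed.

Lemma row_free_gram_unit m n (G : 'M[C]_(m, n)) :
  row_free G -> G *m ctmx G \in unitmx.
Proof.
move=> freeG; rewrite unitmxE unitfE; apply/negP => /det0P [v v_neq0 vG].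
move/negP: v_neq0; apply; apply/eqP.
have : (v *m G) *m ctmx (v *m G) = 0.
  by rewrite ctmx_mul !mulmxA -(mulmxA v) vG mul0mx.
by move/mulmx_ctmx_eq0; rewrite -(mul0mx _ G) => /(row_free_inj freeG).
Qed.

Lemma unitary_conj_mul N (U X Y : 'M[C]_N) :
  ctmx U *m U = 1%:M ->
  U *m X *m ctmx U *m (U *m Y *m ctmx U) = U *m (X *m Y) *m ctmx U.
Proof. by move=> UctU; rewrite !mulmxA -(mulmxA _ (ctmx U)) UctU mulmx1. Qed.

Lemma unitary_conj_inj N (U X Y : 'M[C]_N) :
  ctmx U *m U = 1%:M -> U *m X *m ctmx U = U *m Y *m ctmx U -> X = Y.
Proof.
move=> UctU /(congr1 (fun Z => ctmx U *m Z *m U)).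
by rewrite !mulmxA UctU !mul1mx -!mulmxA UctU !mulmx1.
Qed.

Lemma coisometry_inj r q p (N : 'M[C]_(r, q)) (X Y : 'M[C]_(r, p)) :
  N *m ctmx N = 1%:M -> ctmx N *m X = ctmx N *m Y -> X = Y.
Proof. by move=> NctN /(congr1 (mulmx N)); rewrite !mulmxA NctN !mul1mx. Qed.

End ConjugateTranspose.

Section MoorePenrose.
Variable C : numClosedFieldType.

Lemma penrose_unique m n (M : 'M[C]_(m, n)) X Y :
  penrose M X -> penrose M Y -> X = Y.
Proof.
case=> [MXM XMX ctMX ctXM] [MYM YMY ctMY ctYM].
have ctM_MY : ctmx M = ctmx M *m (M *m Y) by rewrite -ctMY -ctmx_mul MYM.
have ctM_XM : ctmx M = X *m M *m ctmx M by rewrite -{1}MXM -mulmxA ctmx_mul ctXM.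
have eX : X = X *m M *m Y.
  rewrite -{1}XMX -mulmxA -ctMX ctmx_mul ctM_MY !mulmxA.
  by rewrite -(mulmxA X (ctmx X)) -ctmx_mul ctMX mulmxA XMX.
have eY : Y = X *m M *m Y.
  rewrite -{1}YMY -ctYM ctmx_mul ctM_XM -(mulmxA (X *m M)) -ctmx_mul ctYM.
  by rewrite -[LHS]mulmxA YMY.
by rewrite eX -eY.
Qed.

Lemma penrose_full_rank_factor m k n (F : 'M[C]_(m, k)) (G : 'M[C]_(k, n)) :
  G *m ctmx G \in unitmx -> ctmx F *m F \in unitmx ->
  penrose (F *m G)
    (ctmx G *m invmx (G *m ctmx G) *m invmx (ctmx F *m F) *m ctmx F).
Proof.
move=> GGct_unit FctF_unit.
have ct_invG : ctmx (invmx (G *m ctmx G)) = invmx (G *m ctmx G).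
  by rewrite ctmx_inv ctmx_mul ctmxK.
have ct_invF : ctmx (invmx (ctmx F *m F)) = invmx (ctmx F *m F).
  by rewrite ctmx_inv ctmx_mul ctmxK.
have cancelG p (Y : 'M_(p, k)) : Y *m G *m ctmx G *m invmx (G *m ctmx G) = Y.
  by rewrite -!mulmxA (mulmxA G) mulmxV // mulmx1.
have cancelF p (Y : 'M_(p, k)) : Y *m invmx (ctmx F *m F) *m ctmx F *m F = Y.
  by rewrite -!mulmxA mulVmx // mulmx1.
split; rewrite !mulmxA.
- by rewrite cancelG cancelF.
- by rewrite cancelF cancelG.
- by rewrite cancelG !ctmx_mul ctmxK ct_invF mulmxA.
- by rewrite cancelF !ctmx_mul ctmxK ct_invG mulmxA.
Qed.

Lemma penrose_exists m n (M : 'M[C]_(m, n)) : exists X, penrose M X.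
Proof.
have rank_col_base : \rank (col_base M) = \rank M.
  apply/eqP; rewrite eqn_leq rank_leq_col /=.
  by rewrite -{1}(mulmx_base M) mxrankM_maxl.
have G_unit : row_base M *m ctmx (row_base M) \in unitmx.
  exact/row_free_gram_unit/row_base_free.
have F_unit : ctmx (col_base M) *m col_base M \in unitmx.
  have := @row_free_gram_unit _ _ _ (ctmx (col_base M)); rewrite ctmxK; apply.
  by rewrite /row_free /ctmx mxrank_tr mxrank_map rank_col_base.
have := penrose_full_rank_factor G_unit F_unit; rewrite mulmx_base; eauto.
Qed.

Lemma mpinvP m n (M : 'M[C]_(m, n)) : penrose M (mpinv M).
Proof. exact: epsilon_spec (penrose_exists M). Qed.

Lemma mpinv_penrose m n (M : 'M[C]_(m, n)) X : penrose M X -> mpinv M = X.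
Proof. exact: penrose_unique (mpinvP M). Qed.

Lemma mpinvK m n (M : 'M[C]_(m, n)) : mpinv (mpinv M) = M.
Proof. by apply: mpinv_penrose; case: (mpinvP M). Qed.

Lemma mpinv_unit n (M : 'M[C]_n) : M \in unitmx -> mpinv M = invmx M.
Proof.
by move=> Munit; apply: mpinv_penrose; split;
  rewrite ?mulmxV ?mulVmx ?mul1mx ?mulmx1 ?ctmx1.
Qed.

Lemma mpinv_unitary_conj N (U Y : 'M[C]_N) :
  ctmx U *m U = 1%:M -> mpinv (U *m Y *m ctmx U) = U *m mpinv Y *m ctmx U.
Proof.
move=> UctU; apply: mpinv_penrose; case: (mpinvP Y) => YXY XYX ctYX ctXY.
split; rewrite ?unitary_conj_mul // ?YXY ?XYX //.
- by rewrite ctmx_mul ctmxK ctmx_mul ctYX mulmxA.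
- by rewrite ctmx_mul ctmxK ctmx_mul ctXY mulmxA.
Qed.

Lemma mpinv_col_mx0 r s n (Y : 'M[C]_(r, n)) :
  mpinv (col_mx Y (0 : 'M_(s, n))) = row_mx (mpinv Y) 0.
Proof.
apply: mpinv_penrose; case: (mpinvP Y) => YXY XYX ctYX ctXY.
have col_row : col_mx Y (0 : 'M_(s, n)) *m row_mx (mpinv Y) (0 : 'M_(n, s)) =
               block_mx (Y *m mpinv Y) 0 0 0.
  by rewrite mul_col_mx !mul_mx_row !mulmx0 mul0mx block_mxEv.
have row_col : row_mx (mpinv Y) 0 *m col_mx Y (0 : 'M_(s, n)) = mpinv Y *m Y.
  by rewrite mul_row_col mulmx0 addr0.
split.
- by rewrite col_row mul_block_col !mul0mx !addr0 YXY.
- by rewrite row_col mul_mx_row mulmx0 XYX.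
- by rewrite col_row [in LHS]block_mxEh ctmx_row_mx !ctmx_col_mx !ctmx0 ctYX
             -block_mxEv.
- by rewrite row_col ctXY.
Qed.

Lemma mpinv_mul_coisometry r q (X : 'M[C]_r) (N : 'M[C]_(r, q)) :
  N *m ctmx N = 1%:M -> mpinv (X *m N) = ctmx N *m mpinv X.
Proof.
move=> NctN; apply: mpinv_penrose; case: (mpinvP X) => XYX YXY ctXY ctYX.
have cancelN p (Z : 'M_(p, r)) : Z *m N *m ctmx N = Z.
  by rewrite -mulmxA NctN mulmx1.
split; rewrite !mulmxA ?cancelN.
- by rewrite XYX.
- by rewrite -!mulmxA (mulmxA _ X) YXY.
- by rewrite ctXY.
- by rewrite -(mulmxA (ctmx N)) !ctmx_mul ctmxK -ctmx_mul ctYX !mulmxA.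
Qed.

End MoorePenrose.

Lemma block_mx_mul_row0 (R : nzRingType) r s p q (X : 'M[R]_(r, p))
    (K : 'M[R]_(p, r)) (L : 'M[R]_(p, s)) :
  block_mx (X *m K) (X *m L) (0 : 'M_(q, r)) 0 = col_mx (X *m row_mx K L) 0.
Proof. by rewrite block_mxEv -mul_mx_row row_mx0. Qed.

Theorem theorem5p3 (C : numClosedFieldType) (r s : nat)
  (B U : 'M[C]_(r + s)) (d : 'rV[C]_r)
  (K T : 'M[C]_r) (L : 'M[C]_(r, s)) :
  (0 < r)%N ->
  \rank B = r ->
  U *m ctmx U = 1%:M ->
  (forall i, 0 < d 0 i) ->
  K *m ctmx K + L *m ctmx L = 1%:M ->
  B = U *m block_mx (diag_mx d *m K) (diag_mx d *m L) 0 0 *m ctmx U ->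
  T *m T = T ->
  let Sigma := diag_mx d in
  let A := U *m block_mx (mpinv (invmx Sigma *m T) *m K)
                         (mpinv (invmx Sigma *m T) *m L) 0 0 *m ctmx U in
  mpinv (A *m B) = mpinv B *m mpinv A <->
  mpinv (mpinv (invmx Sigma *m T) *m K *m Sigma)
    = invmx Sigma *m ctmx K *m invmx Sigma *m T.
Proof.
move=> _ _ UUct d_gt0 KL_coisometry eB _ Sigma A.
have UctU : ctmx U *m U = 1%:M := mulmx1C UUct.
pose N := row_mx K L; set W := mpinv (invmx Sigma *m T).
have NNct : N *m ctmx N = 1%:M by rewrite ctmx_row_mx mul_row_col.
have Sigma_unit : Sigma \in unitmx.
  by rewrite unitmxE unitfE det_diag; apply/prodf_neq0 => i _; rewrite gt_eqF.
have AB_block : col_mx (W *m N) 0 *m col_mx (Sigma *m N) 0 =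
                col_mx (W *m K *m Sigma *m N) (0 : 'M_(s, r + s)).
  by rewrite mul_col_mx mul0mx -mulmxA mul_row_col mulmx0 addr0 !mulmxA.
have BA_block : row_mx (ctmx N *m invmx Sigma) 0 *m
                  row_mx (ctmx N *m (invmx Sigma *m T)) (0 : 'M_(r + s, s)) =
                row_mx (ctmx N *m (invmx Sigma *m ctmx K *m invmx Sigma *m T)) 0.
  rewrite mul_mx_row mulmx0; congr row_mx.
  by rewrite mulmxA ctmx_row_mx mul_row_col mul0mx addr0 !mulmxA.
rewrite {}/A !block_mx_mul_row0 -/Sigma -/N -/W in eB *; rewrite {}eB.
rewrite !unitary_conj_mul // !mpinv_unitary_conj // unitary_conj_mul // AB_block.
rewrite !mpinv_col_mx0 !(mpinv_mul_coisometry _ NNct).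
rewrite (mpinv_unit Sigma_unit) {2}/W mpinvK BA_block.
split=> [/(unitary_conj_inj UctU)/eq_row_mx[/(coisometry_inj NNct) -> _] | ->] //.
Qed.
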